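(* Let $B$ be a Lie algebra over a field $k$ satisfying $\Phi1$: $\forall x_1,\dots,x_4\ (x_1x_2)(x_3x_4)=0$, $\Phi2$: $\forall x,y\ (xyx=0\wedge xyy=0\to xy=0)$ and $\Phi3$: $\forall x,y,z\ (x\ne0\wedge xy=0\wedge xz=0\to yz=0)$. Let $a\in B\setminus\mathrm{Fit}(B)$. Then $ab\ne0$ for every nonzero $b\in\mathrm{Fit}(B)$.
   Context: Products are left-normed: $xyx=(xy)x$. $\mathrm{Fit}(B)$ is the sum of all nilpotent ideals of $B$. *)

From HB Require Import structures.
From mathcomp Require Import all_boot all_order all_algebra.
Set Implicit Arguments. Unset Strict Implicit. Unset Printing Implicit Defensive.
Import GRing.Theory.
Local Open Scope ring_scope.

Definition is_lie_algebra (k : fieldType) (V : lmodType k) (br : V -> V -> V) : Prop :=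
  [/\ (forall (a : k) (x y z : V), br (a *: x + y) z = a *: br x z + br y z),
      (forall (a : k) (x y z : V), br x (a *: y + z) = a *: br x y + br x z),
      (forall x : V, br x x = 0) &
      (forall x y z : V, br x (br y z) + br y (br z x) + br z (br x y) = 0)].

Definition lnprod (V : Type) (br : V -> V -> V) (x : V) (s : seq V) : V :=
  foldl br x s.

Definition lie_ideal (k : fieldType) (V : lmodType k) (br : V -> V -> V)
    (I : V -> Prop) : Prop :=
  [/\ I 0,
      (forall x y, I x -> I y -> I (x + y)),
      (forall (a : k) x, I x -> I (a *: x)),
      (forall x y, I y -> I (br x y)) &
      (forall x y, I x -> I (br x y))].

(* Nilpotent (as a Lie algebra): for some n, all left-normed products of
   n+1 elements of I vanish (i.e. I^{n+1} = 0 for the lower central series). *)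
Definition lie_nilpotent (V : zmodType) (br : V -> V -> V) (I : V -> Prop) : Prop :=
  exists n : nat, forall (x : V) (s : seq V),
    size s = n -> I x -> (forall y, y \in s -> I y) -> lnprod br x s = 0.

(* Fit(B): the sum of all nilpotent ideals, i.e. the set of finite sums of
   elements each lying in some nilpotent ideal. *)
Definition Fit (k : fieldType) (V : lmodType k) (br : V -> V -> V) (x : V) : Prop :=
  exists s : seq V,
    (forall y, y \in s -> exists I : V -> Prop,
        [/\ lie_ideal br I, lie_nilpotent br I & I y]) /\
    x = \sum_(y <- s) y.

From mathcomp Require Import all_boot all_order all_algebra.
Import GRing.Theory.
Local Open Scope ring_scope.

Set Implicit Arguments.
Unset Strict Implicit.

(* Fit(B) is exactly the centralizer C of B^2.  Under Phi1, C is an ideal with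
   C^3 = 0, so C is contained in Fit(B).  Conversely, an element y of a
   nilpotent ideal has ad y nilpotent, and Phi1 + Phi2 lower the index of
   nilpotency down to x y y = 0 for all x; then c := y(uv) satisfies c y = 0
   and c(uv) = 0 (Phi1), so Phi3 forces c = 0.  Finally, if ab = 0 with
   0 != b in Fit(B) = C, then Phi3 applied to b, a and uv puts a in C. *)

Section LieBracket.
Variables (k : fieldType) (V : lmodType k) (br : V -> V -> V).
Hypothesis HLie : is_lie_algebra br.

Lemma brDl x y z : br (x + y) z = br x z + br y z.
Proof.
by case: (HLie : [/\ _, _, _ & _]) => brl _ _ _; rewrite -[x]scale1r brl !scale1r.
Qed.

Lemma brDr x y z : br z (x + y) = br z x + br z y.
Proof.
by case: (HLie : [/\ _, _, _ & _]) => _ brr _ _; rewrite -[x]scale1r brr !scale1r.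
Qed.

Lemma br0l z : br 0 z = 0.
Proof. by apply: (@addrI _ (br 0 z)); rewrite -brDl !addr0. Qed.

Lemma brZl c x z : br (c *: x) z = c *: br x z.
Proof.
case: (HLie : [/\ _, _, _ & _]) => brl _ _ _.
by rewrite -[c *: x]addr0 brl br0l addr0.
Qed.

Lemma brNl x z : br (- x) z = - br x z.
Proof. by rewrite -scaleN1r brZl scaleN1r. Qed.

Lemma brC x y : br x y = - br y x.
Proof.
case: (HLie : [/\ _, _, _ & _]) => _ _ brxx _.
apply/eqP; rewrite -addr_eq0; apply/eqP.
by have := brxx (x + y); rewrite brDl !brDr !brxx add0r addr0.
Qed.

Lemma lie_ideal_sum (J : V -> Prop) (s : seq V) :
  lie_ideal br J -> (forall y, y \in s -> J y) -> J (\sum_(y <- s) y).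
Proof.
case=> J0 JD _ _ _; elim: s => [|z s IHs] Js; first by rewrite big_nil.
rewrite big_cons; apply: JD; first exact/Js/mem_head.
by apply: IHs => y ys; apply: Js; rewrite inE ys orbT.
Qed.

End LieBracket.

Section AdNilpotent.
Variables (k : fieldType) (V : lmodType k) (br : V -> V -> V).
Hypothesis Phi1 : forall x1 x2 x3 x4 : V, br (br x1 x2) (br x3 x4) = 0.
Hypothesis Phi2 : forall x y : V,
  br (br x y) x = 0 -> br (br x y) y = 0 -> br x y = 0.

Definition ad_nilpotent (n : nat) (y : V) : Prop :=
  forall x, lnprod br x (nseq n y) = 0.

Lemma lnprod_nseqSr x y n :
  lnprod br x (nseq n.+1 y) = br (lnprod br x (nseq n y)) y.
Proof. by elim: n x => [|n IHn] x //=; rewrite -IHn. Qed.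

Lemma ad_nilpotent_leq m n y : (m <= n)%N -> ad_nilpotent m y -> ad_nilpotent n y.
Proof.
move=> /subnKC <-; elim: (n - m)%N => [|d IHd] nil_m; first by rewrite addn0.
by move=> x; rewrite addnS; apply: IHd.
Qed.

(* With p := x (ad y)^n, Phi2 applied to py and y, together with
   ((py)y)(py) = 0 from Phi1, gives (py)y = 0 from ((py)y)y = 0. *)
Lemma ad_nilpotent_pred n y : ad_nilpotent n.+3 y -> ad_nilpotent n.+2 y.
Proof.
move=> nil3 x; have := nil3 x; rewrite !lnprod_nseqSr => pyyy.
exact: Phi2 (Phi1 _ _ _ _) pyyy.
Qed.

Lemma ad_nilpotent2 n y : ad_nilpotent n y -> ad_nilpotent 2 y.
Proof.
elim: n => [|n IHn] nil_n; first exact: ad_nilpotent_leq nil_n.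
case: n IHn nil_n => [|[|n]] IHn nil_n; try exact: ad_nilpotent_leq nil_n.
exact/IHn/ad_nilpotent_pred.
Qed.

Lemma nilpotent_ideal_ad_nilpotent (J : V -> Prop) y :
  lie_ideal br J -> lie_nilpotent br J -> J y -> ad_nilpotent 2 y.
Proof.
case=> _ _ _ Jbr _ [n nilJ] Jy; apply: (@ad_nilpotent2 n.+1) => x /=.
apply: nilJ; [exact: size_nseq | exact: Jbr | by move=> z /nseqP[-> _]].
Qed.

End AdNilpotent.

Section SquareCentralizer.
Variables (k : fieldType) (V : lmodType k) (br : V -> V -> V).
Hypothesis HLie : is_lie_algebra br.
Hypothesis Phi1 : forall x1 x2 x3 x4 : V, br (br x1 x2) (br x3 x4) = 0.
Hypothesis Phi2 : forall x y : V,
  br (br x y) x = 0 -> br (br x y) y = 0 -> br x y = 0.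
Hypothesis Phi3 : forall x y z : V,
  x != 0 -> br x y = 0 -> br x z = 0 -> br y z = 0.

Definition sq_centralizer (x : V) : Prop := forall u v, br x (br u v) = 0.

Lemma sq_centralizer_ideal : lie_ideal br sq_centralizer.
Proof.
split=> [u v|x y Cx Cy u v|c x Cx u v|x y _ u v|x y _ u v]; rewrite ?Phi1 //.
- exact: br0l.
- by rewrite brDl // Cx Cy addr0.
- by rewrite brZl // Cx scaler0.
Qed.

Lemma sq_centralizer_nilpotent : lie_nilpotent br sq_centralizer.
Proof.
exists 2%N => x [|x1 [|x2 [|? ?]]] // _ _ Cs; rewrite /lnprod /= brC //.
by rewrite Cs ?oppr0 // !inE eqxx orbT.
Qed.

Lemma nilpotent_ideal_sub_sq_centralizer (J : V -> Prop) y :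
  lie_ideal br J -> lie_nilpotent br J -> J y -> sq_centralizer y.
Proof.
move=> Jideal Jnil Jy u v; have [//|yuv_neq0] := eqVneq (br y (br u v)) 0.
have yyad : forall x, br (br x y) y = 0 :=
  nilpotent_ideal_ad_nilpotent Phi1 Phi2 Jideal Jnil Jy.
have yuv_y : br (br y (br u v)) y = 0.
  by rewrite (brC HLie y) brNl // (yyad (br u v)) oppr0.
by case/eqP: (yuv_neq0); exact: Phi3 yuv_neq0 yuv_y (Phi1 _ _ _ _).
Qed.

Lemma Fit_sq_centralizer x : Fit br x -> sq_centralizer x.
Proof.
case=> s [Fs ->]; apply: lie_ideal_sum sq_centralizer_ideal _ => y /Fs.
by case=> J [Jideal Jnil Jy]; exact: nilpotent_ideal_sub_sq_centralizer Jy.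
Qed.

Lemma sq_centralizer_Fit x : sq_centralizer x -> Fit br x.
Proof.
move=> Cx; exists [:: x]; split; last by rewrite big_seq1.
move=> y; rewrite inE => /eqP ->.
by exists sq_centralizer; split; [exact: sq_centralizer_ideal
                                 | exact: sq_centralizer_nilpotent | ].
Qed.

End SquareCentralizer.

Unset Implicit Arguments.

Theorem lemma3p2 (k : fieldType) (V : lmodType k) (br : V -> V -> V)
  (HLie : is_lie_algebra br)
  (Phi1 : forall x1 x2 x3 x4 : V, br (br x1 x2) (br x3 x4) = 0)
  (Phi2 : forall x y : V, br (br x y) x = 0 -> br (br x y) y = 0 -> br x y = 0)
  (Phi3 : forall x y z : V, x != 0 -> br x y = 0 -> br x z = 0 -> br y z = 0)
  (a : V) (Ha : ~ Fit br a) :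
  forall b : V, Fit br b -> b != 0 -> br a b != 0.
Proof.
move=> b Fb b_neq0; apply/eqP => ab0; apply/Ha/(sq_centralizer_Fit HLie Phi1).
have Cb := Fit_sq_centralizer HLie Phi1 Phi2 Phi3 Fb.
move=> u v; apply: Phi3 b_neq0 _ (Cb u v).
by rewrite brC // ab0 oppr0.
Qed.
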